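(* Let $p\ge 2$, $m,L\in\mathbb{N}$ with $L\ge 1$, and let $z_1^{[0,T_1-1]},\dots,z_p^{[0,T_p-1]}$ be finite signal sequences with $z_i(k)\in\mathbb{R}^m$ and $T_i\ge L$. Then: 1) If $\{z_i^{[0,T_i-1]}\}_{i=1}^p$ are CCPE of order $L$ (so in particular $T_1=\dots=T_p=:T_0$), then they are also MCPE of order $L$, and also HCPE of order $L$ (for a split index $\bar p$, i.e. viewing $z_1,\dots,z_{\bar p}$ as the cumulative part and $z_{\bar p+1},\dots,z_p$ as the mosaic part). 2) Suppose $\{z_i^{[0,T_i-1]}\}_{i=1}^p$ are MCPE of order $L$. i) If $T_0=T_1=\dots=T_p$ and, for every choice of nonzero weights $\alpha_1,\dots,\alpha_p$, $\operatorname{im}\big(H_L^{mos}(\{z_i^{[0,T_i-1]}\}_{i=1}^p)^\top\big)\cap\operatorname{leftker}\big(\mathbf{1}_p\otimes I_{T_0-L+1}\big)=\{0\}$, then $\{z_i^{[0,T_i-1]}\}_{i=1}^p$ are also CCPE of order $L$. ii) If $T_0=T_1=\dots=T_{\bar p}$ for some $1\le\bar p<p$ and, for every choice of nonzero weights, $\operatorname{im}\big(H_L^{mos}(\{z_i^{[0,T_i-1]}\}_{i=1}^{p})^\top\big)\cap\operatorname{leftker}\Big(\begin{bmatrix}\mathbf{1}_{\bar p}\otimes I_{T_0-L+1}&0\\0&I_{S}\end{bmatrix}\Big)=\{0\}$ with $S=\sum_{i=\bar p+1}^p(T_i-L+1)$, then $\{z_i^{[0,T_i-1]}\}_{i=1}^p$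 are also HCPE of order $L$ (with cumulative part $z_1,\dots,z_{\bar p}$). 3) Suppose $\{z_i^{[0,T_i-1]}\}_{i=1}^p$ are HCPE of order $L$ with cumulative part $z_1,\dots,z_{\bar p}$ (common length $T_0$) and mosaic part $z_{\bar p+1},\dots,z_p$. Then i) $\{z_i^{[0,T_i-1]}\}_{i=1}^p$ are also MCPE of order $L$; ii) if moreover $T_0=T_{\bar p+1}=\dots=T_p$ and, for every choice of nonzero weights, $\operatorname{im}\big(H_L^{hyb}(\{z_i^{[0,T_i-1]}\}_{i=1}^p)^\top\big)\cap\operatorname{leftker}\big(\mathbf{1}_{p-\bar p+1}\otimes I_{T_0-L+1}\big)=\{0\}$, then $\{z_i^{[0,T_i-1]}\}_{i=1}^p$ are also CCPE of order $L$.
   Context: For a sequence $z^{[0,T-1]}=(z(0),\dots,z(T-1))$ with $z(k)\in\mathbb{R}^m$ and $L\le T$, the block Hankel matrix of order $L$ is $H_L(z^{[0,T-1]})\in\mathbb{R}^{mL\times(T-L+1)}$ whose $(r,c)$ block entry ($r=0,\dots,L-1$, $c=0,\dots,T-L$) is $z(r+c)$. Given nonzero real weights $\alpha_1,\dots,\alpha_p$: - $H_L^{mos}(\{z_i^{[0,T_i-1]}\}_{i=1}^p)=[\alpha_1H_L(z_1^{[0,T_1-1]})\ \cdots\ \alpha_pH_L(z_p^{[0,T_p-1]})]$; the signals are mosaic collectively persistently exciting (MCPE) of order $L$ if this matrix has full row rank $mL$ for every choice of nonzero $\alpha_i$. - If all lengths equal $T_0$: $H_L^{cum}(\{z_i^{[0,T_0-1]}\}_{i=1}^p)=\sum_{i=1}^p\alpha_iH_L(z_i^{[0,T_0-1]})$;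 the signals are cumulative collectively persistently exciting (CCPE) of order $L$ if this matrix has full row rank $mL$ for every choice of nonzero $\alpha_i$. - If $z_1,\dots,z_{\bar p}$ have common length $T_0$ and $z_{\bar p+1},\dots,z_p$ have lengths $T_i$: $H_L^{hyb}(\{z_i\}_{i=1}^p)=[\,H_L^{cum}(\{z_i^{[0,T_0-1]}\}_{i=1}^{\bar p})\ \ H_L^{mos}(\{z_i^{[0,T_i-1]}\}_{i=\bar p+1}^p)\,]$; the signals are hybrid collectively persistently exciting (HCPE) of order $L$ if this matrix has full row rank $mL$ for every choice of nonzero $\alpha_i$. For a matrix $M$, $\operatorname{leftker}M$ is the space of row vectors $v$ with $vM=0$; it is identified with a subspace of column vectors (by transposition) when intersected with $\operatorname{im}(H^\top)$. $\mathbf{1}_q$ is the all-ones column vector of length $q$, $\otimes$ the Kronecker product. *)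

From HB Require Import structures.
From mathcomp Require Import all_boot all_order all_algebra.
From mathcomp Require Import reals.
Set Implicit Arguments. Unset Strict Implicit. Unset Printing Implicit Defensive.
Import Order.TTheory GRing.Theory Num.Theory.
Local Open Scope ring_scope.

Section Defs.
Variable R : realType.

(* Row index = r*m + a (block row r, component a), via mxvec (row-major);
   column c; entry = (z (r+c)) a. *)
Definition hankel (m L T : nat) (z : nat -> 'cV[R]_m) : 'M[R]_(L * m, T - L + 1) :=
  (\matrix_(c < T - L + 1)
      mxvec (\matrix_(r < L, a < m) z (r + c)%N a ord0))^T.

(* "I" block of size n x k with ones on the diagonal (an identity matrix when
   n = k, which is the only case where it is used). *)
Definition eyemx (n k : nat) : 'M[R]_(n, k) := \matrix_(a, b) ((a : nat) == b)%:R.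

Lemma hyb_idx_subproof (pbar p : nat) (j : 'I_(p - pbar)) : (pbar + j < p)%N.
Proof. by have := ltn_ord j; rewrite ltn_subRL. Qed.
Definition hyb_idx (pbar p : nat) (j : 'I_(p - pbar)) : 'I_p :=
  Ordinal (hyb_idx_subproof j).

Variables (p m L : nat).

Definition Hmos (T : 'I_p -> nat) (z : 'I_p -> nat -> 'cV[R]_m)
    (alpha : 'I_p -> R) : 'M[R]_(L * m, \sum_(i < p) (T i - L + 1)) :=
  \mxrow_(i < p) (alpha i *: hankel L (T i) (z i)).

Definition Hcum (T0 : nat) (z : 'I_p -> nat -> 'cV[R]_m) (alpha : 'I_p -> R)
    : 'M[R]_(L * m, T0 - L + 1) :=
  \sum_(i < p) alpha i *: hankel L T0 (z i).

Definition Hhyb (pbar T0 : nat) (T : 'I_p -> nat) (z : 'I_p -> nat -> 'cV[R]_m)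
    (alpha : 'I_p -> R)
    : 'M[R]_(L * m, (T0 - L + 1) + \sum_(j < p - pbar) (T (hyb_idx j) - L + 1)) :=
  row_mx (\sum_(i < p | (i < pbar)%N) alpha i *: hankel L T0 (z i))
         (\mxrow_(j < p - pbar)
            (alpha (hyb_idx j) *: hankel L (T (hyb_idx j)) (z (hyb_idx j)))).

Definition MCPE (T : 'I_p -> nat) (z : 'I_p -> nat -> 'cV[R]_m) : Prop :=
  forall alpha : 'I_p -> R, (forall i, alpha i != 0) ->
    \rank (Hmos T z alpha) = (m * L)%N.

Definition CCPE (T0 : nat) (z : 'I_p -> nat -> 'cV[R]_m) : Prop :=
  forall alpha : 'I_p -> R, (forall i, alpha i != 0) ->
    \rank (Hcum T0 z alpha) = (m * L)%N.

Definition HCPE (pbar T0 : nat) (T : 'I_p -> nat) (z : 'I_p -> nat -> 'cV[R]_m)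
    : Prop :=
  forall alpha : 'I_p -> R, (forall i, alpha i != 0) ->
    \rank (Hhyb pbar T0 T z alpha) = (m * L)%N.

(* 1_p (x) I_{T0-L+1}, written as a vertical stack of p identity blocks
   (block i has T_i - L + 1 = T0 - L + 1 rows when T_i = T0). *)
Definition Kcum (T0 : nat) (T : 'I_p -> nat)
    : 'M[R]_(\sum_(i < p) (T i - L + 1), T0 - L + 1) :=
  \mxcol_(i < p) eyemx (T i - L + 1) (T0 - L + 1).

(* [ 1_pbar (x) I_{T0-L+1}   0 ;  0   I_S ],  S = sum_{i>pbar} (T_i - L + 1) *)
Definition Khyb (pbar T0 : nat) (T : 'I_p -> nat)
    : 'M[R]_(\sum_(i < p) (T i - L + 1),
             (T0 - L + 1) + \sum_(j < p - pbar) (T (hyb_idx j) - L + 1)) :=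
  \mxcol_(i < p)
    row_mx (if (i < pbar)%N then eyemx (T i - L + 1) (T0 - L + 1) else 0)
           (\mxrow_(j < p - pbar)
               (if i == hyb_idx j then eyemx (T i - L + 1) (T (hyb_idx j) - L + 1)
                else 0)).

(* 1_{p - pbar + 1} (x) I_{T0-L+1}, as a stack of p - pbar + 1 identity blocks *)
Definition Khyb_cum (pbar T0 : nat) (T : 'I_p -> nat)
    : 'M[R]_((T0 - L + 1) + \sum_(j < p - pbar) (T (hyb_idx j) - L + 1),
             T0 - L + 1) :=
  col_mx (eyemx (T0 - L + 1) (T0 - L + 1))
         (\mxcol_(j < p - pbar) eyemx (T (hyb_idx j) - L + 1) (T0 - L + 1)).

End Defs.

Arguments Kcum {R p} L T0 T.
Arguments Khyb {R p} L pbar T0 T.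
Arguments Khyb_cum {R p} L pbar T0 T.

From HB Require Import structures.
From mathcomp Require Import all_boot all_order all_algebra.
From mathcomp Require Import reals.
From mathcomp Require Import zify.
Import Order.TTheory GRing.Theory Num.Theory.
Local Open Scope ring_scope.

(* All three collective Hankel matrices are column recombinations of one another:
   H^cum = H^mos K_cum, H^hyb = H^mos K_hyb and H^cum = H^hyb K_hyb,cum, where
   each K stacks identity blocks.  Full row rank of a product A B forces full
   row rank of A, which gives every implication without an extra hypothesis;
   conversely a row-free A stays row-free after right multiplication by B as
   soon as no nonzero vector of the row space of A is killed by B, and that is
   exactly the trivial-intersection hypothesis of the remaining implications. *)

Section RowFree.
Variable F : fieldType.

Lemma row_free_mulmxl n k l (A : 'M[F]_(n, k)) (B : 'M[F]_(k, l)) :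
  row_free (A *m B) -> row_free A.
Proof.
rewrite /row_free => /eqP rkAB; rewrite eqn_leq rank_leq_row.
by rewrite -{1}rkAB mxrankM_maxl.
Qed.

Lemma row_free_mulmx_kermx n k l (A : 'M[F]_(n, k)) (B : 'M[F]_(k, l)) :
  row_free A ->
  (forall v : 'rV_k, (v <= A)%MS -> (v <= kermx B)%MS -> v = 0) ->
  row_free (A *m B).
Proof.
move=> freeA capA_kerB; apply: inj_row_free => u uAB0.
have /eqP : u *m A = 0.
  by apply: capA_kerB; [exact: submxMl | apply/sub_kermxP; rewrite -mulmxA].
by rewrite mulmx_free_eq0 // => /eqP.
Qed.

End RowFree.

Lemma sum_row_mx (V : nmodType) (I : finType) (P : pred I) m n1 n2
    (A : I -> 'M[V]_(m, n1)) (B : I -> 'M[V]_(m, n2)) :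
  \sum_(i | P i) row_mx (A i) (B i) =
  row_mx (\sum_(i | P i) A i) (\sum_(i | P i) B i).
Proof.
apply: (big_rec3 (fun x y z => x = row_mx y z)) => [|i x y w _ ->].
  by rewrite row_mx0.
by rewrite add_row_mx.
Qed.

Lemma hyb_idx_inj pbar p : injective (@hyb_idx pbar p).
Proof. by move=> j k /(congr1 val) /= /addnI /val_inj. Qed.

Lemma hyb_idxP pbar p (i : 'I_p) :
  (pbar <= i)%N -> {j : 'I_(p - pbar) | i = hyb_idx j}.
Proof.
move=> le_pbar_i; have lt_j : (i - pbar < p - pbar)%N by have := ltn_ord i; lia.
by exists (Ordinal lt_j); apply/val_inj => /=; lia.
Qed.

Lemma big_hyb_idx (V : nmodType) pbar p (f : 'I_p -> V) :
  \sum_(j < p - pbar) f (hyb_idx j) = \sum_(i < p | ~~ (i < pbar)%N) f i.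
Proof.
rewrite -(big_imset _ (in2W (@hyb_idx_inj pbar p))) /=; apply: eq_bigl => i.
rewrite -leqNgt; apply/imsetP/idP => [[j _ ->]|/hyb_idxP[j ->]].
  exact: leq_addr.
by exists j.
Qed.

Section CollectiveHankel.
Variables (R : realType) (p m L : nat).
Variables (T : 'I_p -> nat) (z : 'I_p -> nat -> 'cV[R]_m).

Lemma eyemx_id n : eyemx R n n = 1%:M.
Proof. by apply/matrixP=> a b; rewrite !mxE. Qed.

Lemma mulmx_hankel_eyemx n T0 (y : nat -> 'cV[R]_m) : n = T0 ->
  hankel L n y *m eyemx R (n - L + 1) (T0 - L + 1) = hankel L T0 y.
Proof. by move=> ->; rewrite eyemx_id mulmx1. Qed.

Lemma Hcum_Hmos T0 alpha : (forall i, T i = T0) ->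
  Hcum L T0 z alpha = Hmos L T z alpha *m Kcum L T0 T.
Proof.
move=> T_T0; rewrite /Hmos /Kcum mul_mxrow_mxcol /Hcum; apply: eq_bigr => i _.
by rewrite -scalemxAl mulmx_hankel_eyemx.
Qed.

Lemma Hhyb_Hmos pbar T0 alpha : (forall i : 'I_p, (i < pbar)%N -> T i = T0) ->
  Hhyb L pbar T0 T z alpha = Hmos L T z alpha *m Khyb L pbar T0 T.
Proof.
move=> T_T0; rewrite /Hmos /Khyb mul_mxrow_mxcol.
rewrite (eq_bigr (fun i => row_mx
   ((alpha i *: hankel L (T i) (z i)) *m
      (if (i < pbar)%N then eyemx R (T i - L + 1) (T0 - L + 1) else 0))
   (\mxrow_j ((alpha i *: hankel L (T i) (z i)) *m
      (if i == hyb_idx j then eyemx R (T i - L + 1) (T (hyb_idx j) - L + 1)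
       else 0))))); last by move=> i _; rewrite mul_mx_row mul_mxrow.
rewrite sum_row_mx -mxrow_sum /Hhyb; congr row_mx.
  rewrite big_mkcond; apply: eq_bigr => i _; case: ifP => lt_i_pbar.
    by rewrite -scalemxAl mulmx_hankel_eyemx ?T_T0.
  by rewrite mulmx0.
apply: eq_mxrow => j; rewrite (bigD1 (hyb_idx j)) //= eqxx big1 ?addr0.
  by rewrite eyemx_id mulmx1.
by move=> i /negbTE ->; rewrite mulmx0.
Qed.

Lemma Hcum_Hhyb pbar T0 alpha : (forall i, T i = T0) ->
  Hcum L T0 z alpha = Hhyb L pbar T0 T z alpha *m Khyb_cum L pbar T0 T.
Proof.
move=> T_T0; rewrite /Hhyb /Khyb_cum mul_row_col eyemx_id mulmx1 mul_mxrow_mxcol.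
under [X in _ = _ + X]eq_bigr do rewrite -scalemxAl mulmx_hankel_eyemx //.
rewrite (@big_hyb_idx _ pbar p (fun i => alpha i *: hankel L T0 (z i))).
by rewrite /Hcum (bigID (fun i : 'I_p => (i < pbar)%N)).
Qed.

Lemma full_rankE k (H : 'M[R]_(L * m, k)) : \rank H = (m * L)%N <-> row_free H.
Proof. by rewrite /row_free [(m * L)%N]mulnC; split=> [->|/eqP]. Qed.

Lemma CCPE_MCPE T0 : (forall i, T i = T0) -> CCPE L T0 z -> MCPE L T z.
Proof.
move=> T_T0 cumz alpha alpha_nz; have := cumz alpha alpha_nz.
by rewrite Hcum_Hmos // => /full_rankE/row_free_mulmxl/full_rankE.
Qed.

Lemma CCPE_HCPE pbar T0 :
  (forall i, T i = T0) -> CCPE L T0 z -> HCPE L pbar T0 T z.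
Proof.
move=> T_T0 cumz alpha alpha_nz; have := cumz alpha alpha_nz.
by rewrite (Hcum_Hhyb pbar) // => /full_rankE/row_free_mulmxl/full_rankE.
Qed.

Lemma HCPE_MCPE pbar T0 : (forall i : 'I_p, (i < pbar)%N -> T i = T0) ->
  HCPE L pbar T0 T z -> MCPE L T z.
Proof.
move=> T_T0 hybz alpha alpha_nz; have := hybz alpha alpha_nz.
by rewrite Hhyb_Hmos // => /full_rankE/row_free_mulmxl/full_rankE.
Qed.

Lemma MCPE_CCPE T0 : (forall i, T i = T0) ->
  (forall alpha : 'I_p -> R, (forall i, alpha i != 0) ->
     forall v : 'rV_ _, (v <= Hmos L T z alpha)%MS -> (v <= kermx (Kcum L T0 T))%MS ->
     v = 0) ->
  MCPE L T z -> CCPE L T0 z.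
Proof.
move=> T_T0 capK mosz alpha alpha_nz; apply/full_rankE; rewrite Hcum_Hmos //.
by apply: row_free_mulmx_kermx; [apply/full_rankE/mosz | exact: capK].
Qed.

Lemma MCPE_HCPE pbar T0 : (forall i : 'I_p, (i < pbar)%N -> T i = T0) ->
  (forall alpha : 'I_p -> R, (forall i, alpha i != 0) ->
     forall v : 'rV_ _, (v <= Hmos L T z alpha)%MS ->
     (v <= kermx (Khyb L pbar T0 T))%MS -> v = 0) ->
  MCPE L T z -> HCPE L pbar T0 T z.
Proof.
move=> T_T0 capK mosz alpha alpha_nz; apply/full_rankE; rewrite Hhyb_Hmos //.
by apply: row_free_mulmx_kermx; [apply/full_rankE/mosz | exact: capK].
Qed.

Lemma HCPE_CCPE pbar T0 : (forall i, T i = T0) ->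
  (forall alpha : 'I_p -> R, (forall i, alpha i != 0) ->
     forall v : 'rV_ _, (v <= Hhyb L pbar T0 T z alpha)%MS ->
     (v <= kermx (Khyb_cum L pbar T0 T))%MS -> v = 0) ->
  HCPE L pbar T0 T z -> CCPE L T0 z.
Proof.
move=> T_T0 capK hybz alpha alpha_nz; apply/full_rankE; rewrite (Hcum_Hhyb pbar) //.
by apply: row_free_mulmx_kermx; [apply/full_rankE/hybz | exact: capK].
Qed.

End CollectiveHankel.

Theorem theorem1 (R : realType) (p m L : nat) (T : 'I_p -> nat)
    (z : 'I_p -> nat -> 'cV[R]_m) :
  (2 <= p)%N -> (1 <= L)%N -> (forall i, L <= T i)%N ->
  [/\
   (* 1) CCPE ==> MCPE and HCPE *)
   (forall T0 : nat, (forall i, T i = T0) -> CCPE L T0 z ->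
      MCPE L T z /\
      (forall pbar : nat, (0 < pbar < p)%N -> HCPE L pbar T0 T z)),
   (* 2) MCPE ==> ... *)
   (MCPE L T z ->
      (forall T0 : nat, (forall i, T i = T0) ->
         (forall alpha : 'I_p -> R, (forall i, alpha i != 0) ->
            forall v : 'rV_ _, (v <= Hmos L T z alpha)%MS -> (v <= kermx (Kcum L T0 T))%MS -> v = 0) ->
         CCPE L T0 z)
      /\
      (forall (T0 pbar : nat), (1 <= pbar < p)%N ->
         (forall i : 'I_p, (i < pbar)%N -> T i = T0) ->
         (forall alpha : 'I_p -> R, (forall i, alpha i != 0) ->
            forall v : 'rV_ _, (v <= Hmos L T z alpha)%MS -> (v <= kermx (Khyb L pbar T0 T))%MS -> v = 0) ->
         HCPE L pbar T0 T z))
   &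
   (* 3) HCPE ==> ... *)
   (forall (T0 pbar : nat), (1 <= pbar < p)%N ->
      (forall i : 'I_p, (i < pbar)%N -> T i = T0) ->
      HCPE L pbar T0 T z ->
      MCPE L T z /\
      ((forall j : 'I_(p - pbar), T (hyb_idx j) = T0) ->
       (forall alpha : 'I_p -> R, (forall i, alpha i != 0) ->
          forall v : 'rV_ _, (v <= Hhyb L pbar T0 T z alpha)%MS -> (v <= kermx (Khyb_cum L pbar T0 T))%MS -> v = 0) ->
       CCPE L T0 z))].
Proof.
move=> _ _ _; split.
- move=> T0 T_T0 cumz; split; first exact: CCPE_MCPE cumz.
  by move=> pbar _; apply: CCPE_HCPE cumz.
- move=> mosz; split=> [T0 T_T0 capK | T0 pbar _ T_T0 capK].
    exact: MCPE_CCPE mosz.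
  exact: MCPE_HCPE mosz.
- move=> T0 pbar _ T_cum hybz; split; first exact: HCPE_MCPE hybz.
  move=> T_mos capK; apply: HCPE_CCPE capK hybz => i.
  by case: (ltnP i pbar) => [/T_cum | /hyb_idxP[j ->]].
Qed.
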